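(* Let $H$ be an $n\times n$ Hermitian matrix, $\hbar>0$, $\psi_0\in\mathbb C^n$ with $\|\psi_0\|=1$, $\rho_0=\psi_0\psi_0^\dagger$, and $\kappa(t)$ an arbitrary smooth curve of skew-Hermitian matrices. Let $U(t)\in\mathcal U(n)$ solve $\dot U=U\xi_H$ with $$\xi_H=-i\hbar^{-1}H_H+\{\mathbf 1-2\rho_0,\kappa\},\qquad H_H:=U^\dagger HU .$$ Then (i) $[\,i\hbar\xi_H-H_H,\rho_0]=0$; (ii) $\dot H_H=[H_H,\{\mathbf 1-2\rho_0,\kappa\}]$, and the energy is conserved: $\mathrm{Tr}(\rho_0\dot H_H)=0$; (iii) $\psi(t)=U(t)\psi_0$ satisfies $i\hbar\dot\psi=H\psi+\alpha\psi$ with the real function $\alpha=-2i\hbar\,\psi_0^\dagger\kappa\psi_0$.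
   Context: $\{A,B\}=AB+BA$, $[A,B]=AB-BA$, $\mathbf 1$ is the identity matrix. *)

From Stdlib Require Import Reals.
Open Scope R_scope.

Record C := mkC { Re : R ; Im : R }.
Definition C0 : C := mkC 0 0.
Definition C1 : C := mkC 1 0.
Definition Ci : C := mkC 0 1.
Definition RtoC (x : R) : C := mkC x 0.
Definition Cadd (z w : C) : C := mkC (Re z + Re w) (Im z + Im w).
Definition Copp (z : C) : C := mkC (- Re z) (- Im z).
Definition Csub (z w : C) : C := Cadd z (Copp w).
Definition Cmul (z w : C) : C :=
  mkC (Re z * Re w - Im z * Im w) (Re z * Im w + Im z * Re w).
Definition Cconj (z : C) : C := mkC (Re z) (- Im z).

Fixpoint csum (n : nat) (f : nat -> C) : C :=
  match n with O => C0 | S k => Cadd (csum k f) (f k) end.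

(* ---------- matrices and vectors (only indices < n are meaningful) ---------- *)
Definition Mat := nat -> nat -> C.
Definition Vec := nat -> C.

Definition mid : Mat := fun i j => if Nat.eqb i j then C1 else C0.
Definition mzero : Mat := fun _ _ => C0.
Definition madd (A B : Mat) : Mat := fun i j => Cadd (A i j) (B i j).
Definition msub (A B : Mat) : Mat := fun i j => Csub (A i j) (B i j).
Definition mscal (c : C) (A : Mat) : Mat := fun i j => Cmul c (A i j).
Definition mmul (n : nat) (A B : Mat) : Mat :=
  fun i j => csum n (fun k => Cmul (A i k) (B k j)).
Definition adj (A : Mat) : Mat := fun i j => Cconj (A j i).
Definition mtrace (n : nat) (A : Mat) : C := csum n (fun i => A i i).
Definition comm (n : nat) (A B : Mat) : Mat := msub (mmul n A B) (mmul n B A).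
Definition acomm (n : nat) (A B : Mat) : Mat := madd (mmul n A B) (mmul n B A).

Definition mvmul (n : nat) (A : Mat) (v : Vec) : Vec :=
  fun i => csum n (fun k => Cmul (A i k) (v k)).
Definition vdot (n : nat) (u v : Vec) : C := csum n (fun k => Cmul (Cconj (u k)) (v k)).
Definition outer (psi : Vec) : Mat := fun i j => Cmul (psi i) (Cconj (psi j)).

Definition meq (n : nat) (A B : Mat) : Prop :=
  forall i j, (i < n)%nat -> (j < n)%nat -> A i j = B i j.
Definition veq (n : nat) (u v : Vec) : Prop :=
  forall i, (i < n)%nat -> u i = v i.

Definition hermitian (n : nat) (A : Mat) : Prop := meq n (adj A) A.
Definition skew_hermitian (n : nat) (A : Mat) : Prop := meq n (adj A) (mscal (RtoC (-1)) A).
Definition unitary (n : nat) (U : Mat) : Prop :=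
  meq n (mmul n (adj U) U) mid /\ meq n (mmul n U (adj U)) mid.
Definition unit_vec (n : nat) (v : Vec) : Prop := vdot n v v = C1.

Definition cderiv (f : R -> C) (l : C) (t : R) : Prop :=
  derivable_pt_lim (fun s => Re (f s)) t (Re l) /\
  derivable_pt_lim (fun s => Im (f s)) t (Im l).
Definition mderiv (n : nat) (A : R -> Mat) (A' : Mat) (t : R) : Prop :=
  forall i j, (i < n)%nat -> (j < n)%nat -> cderiv (fun s => A s i j) (A' i j) t.
Definition vderiv (n : nat) (v : R -> Vec) (v' : Vec) (t : R) : Prop :=
  forall i, (i < n)%nat -> cderiv (fun s => v s i) (v' i) t.

Definition smoothR (f : R -> R) : Prop :=
  exists D : nat -> R -> R, (forall t, D O t = f t) /\
    (forall k t, derivable_pt_lim (D k) t (D (S k) t)).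
Definition smooth_curve (n : nat) (A : R -> Mat) : Prop :=
  forall i j, (i < n)%nat -> (j < n)%nat ->
    smoothR (fun t => Re (A t i j)) /\ smoothR (fun t => Im (A t i j)).

Definition rho0 (psi0 : Vec) : Mat := outer psi0.
Definition HH (n : nat) (H U : Mat) : Mat := mmul n (adj U) (mmul n H U).
Definition refl0 (psi0 : Vec) : Mat := msub mid (mscal (RtoC 2) (rho0 psi0)).
Definition xiH (n : nat) (hbar : R) (H : Mat) (psi0 : Vec) (kappa U : Mat) : Mat :=
  madd (mscal (Cmul (Copp Ci) (RtoC (/ hbar))) (HH n H U))
       (acomm n (refl0 psi0) kappa).
Definition alpha (n : nat) (hbar : R) (psi0 : Vec) (kappa : Mat) : C :=
  Cmul (Cmul (RtoC (-2)) (Cmul Ci (RtoC hbar))) (vdot n psi0 (mvmul n kappa psi0)).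

(* Write A = {1 - 2 rho0, kappa} and xiH = c H_H + A with c = -i/hbar.  Since rho0
   is a rank-one projection, rho0 A = A rho0 (both equal -2 rho0 kappa rho0); this
   gives (i), because i hbar xiH - H_H = i hbar A, and energy conservation, by
   cyclicity of the trace.  As c is imaginary and A skew-Hermitian, xiH is
   skew-Hermitian, so H_H = U^† H U obeys the Heisenberg equation
   H_H' = [H_H, xiH] = [H_H, A].  Finally A psi0 = -2 (psi0^† kappa psi0) psi0 and
   U H_H = H U turn psi' = U xiH psi0 into the Schroedinger equation with the phase
   alpha, which is real because psi0^† kappa psi0 is imaginary. *)

From Stdlib Require Import Reals Lra Lia Ring Setoid Morphisms FunctionalExtensionality.
Open Scope R_scope.

Lemma C_ext (z w : C) : Re z = Re w -> Im z = Im w -> z = w.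
Proof. destruct z, w; simpl; intros; subst; reflexivity. Qed.

Lemma C_ring_theory : ring_theory C0 C1 Cadd Cmul Csub Copp (@eq C).
Proof. constructor; intros; apply C_ext; simpl; ring. Qed.
Add Ring C_ring : C_ring_theory.

Lemma Cconj_add a b : Cconj (Cadd a b) = Cadd (Cconj a) (Cconj b).
Proof. apply C_ext; simpl; ring. Qed.
Lemma Cconj_sub a b : Cconj (Csub a b) = Csub (Cconj a) (Cconj b).
Proof. apply C_ext; simpl; ring. Qed.
Lemma Cconj_mul a b : Cconj (Cmul a b) = Cmul (Cconj a) (Cconj b).
Proof. apply C_ext; simpl; ring. Qed.
Lemma Cconj_involutive a : Cconj (Cconj a) = a.
Proof. apply C_ext; simpl; ring. Qed.
Lemma Cconj_RtoC r : Cconj (RtoC r) = RtoC r.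
Proof. apply C_ext; simpl; ring. Qed.

Lemma RtoC_2 : RtoC 2 = Cadd C1 C1. Proof. apply C_ext; simpl; ring. Qed.
Lemma RtoC_m1 : RtoC (-1) = Copp C1. Proof. apply C_ext; simpl; ring. Qed.
Lemma RtoC_m2 : RtoC (-2) = Copp (Cadd C1 C1). Proof. apply C_ext; simpl; ring. Qed.

Lemma Cmul_1_l z : Cmul C1 z = z.
Proof. ring. Qed.

Lemma Cmul_m1 z : Cmul (Copp C1) z = Copp z.
Proof. ring. Qed.

Lemma Cconj_opp_Re_0 z : Cconj z = Copp z -> Re z = 0.
Proof. destruct z as [x y]; intros E; apply (f_equal Re) in E; unfold Cconj, Copp in E; simpl in *; lra. Qed.

(** * Finite sums *)

Lemma csum_ext n f g : (forall k, (k < n)%nat -> f k = g k) -> csum n f = csum n g.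
Proof.
  induction n as [|n IH]; intros E; simpl; [reflexivity|].
  rewrite IH, E; auto with arith.
Qed.

Lemma csum_zero n : csum n (fun _ => C0) = C0.
Proof. induction n as [|n IH]; simpl; [reflexivity|]. rewrite IH; ring. Qed.

Lemma csum_add n f g : csum n (fun k => Cadd (f k) (g k)) = Cadd (csum n f) (csum n g).
Proof. induction n as [|n IH]; simpl; [ring|]. rewrite IH; ring. Qed.

Lemma csum_mul_l n c f : csum n (fun k => Cmul c (f k)) = Cmul c (csum n f).
Proof. induction n as [|n IH]; simpl; [ring|]. rewrite IH; ring. Qed.

Lemma csum_mul_r n c f : csum n (fun k => Cmul (f k) c) = Cmul (csum n f) c.
Proof. induction n as [|n IH]; simpl; [ring|]. rewrite IH; ring. Qed.

Lemma csum_conj n f : Cconj (csum n f) = csum n (fun k => Cconj (f k)).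
Proof.
  induction n as [|n IH]; simpl; [apply C_ext; simpl; ring|].
  rewrite Cconj_add, IH; reflexivity.
Qed.

Lemma csum_swap n m f :
  csum n (fun k => csum m (fun l => f k l)) = csum m (fun l => csum n (fun k => f k l)).
Proof.
  induction n as [|n IH]; simpl; [symmetry; apply csum_zero|].
  rewrite IH, <- csum_add; reflexivity.
Qed.

Lemma csum_delta n i f : (i < n)%nat -> csum n (fun k => Cmul (mid i k) (f k)) = f i.
Proof.
  induction n as [|n IH]; intros Hi; [lia|]; simpl; unfold mid at 2.
  destruct (Nat.eqb_spec i n) as [->|Hne].
  - rewrite (csum_ext n _ (fun _ => C0)), csum_zero; [ring|].
    intros k Hk; unfold mid; destruct (Nat.eqb_spec n k); [lia|ring].
  - rewrite IH by lia; ring.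
Qed.

Lemma csum_delta_r n j f : (j < n)%nat -> csum n (fun k => Cmul (f k) (mid k j)) = f j.
Proof.
  intros Hj; rewrite <- (csum_delta n j f Hj); apply csum_ext; intros k _.
  unfold mid; rewrite Nat.eqb_sym; ring.
Qed.

(** * Matrix algebra *)

Ltac mat_ext := let i := fresh "i" in let j := fresh "j" in
  apply functional_extensionality; intro i; apply functional_extensionality; intro j.

#[global] Instance meq_equivalence n : Equivalence (meq n).
Proof.
  split; intros A; unfold meq; [auto|intros B E i j Hi Hj; symmetry; auto|].
  intros B D E1 E2 i j Hi Hj; rewrite E1, E2; auto.
Qed.

#[global] Instance madd_proper n : Proper (meq n ==> meq n ==> meq n) madd.
Proof. intros A A' EA B B' EB i j Hi Hj; unfold madd; rewrite EA, EB; auto. Qed.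
#[global] Instance msub_proper n : Proper (meq n ==> meq n ==> meq n) msub.
Proof. intros A A' EA B B' EB i j Hi Hj; unfold msub; rewrite EA, EB; auto. Qed.
#[global] Instance mscal_proper n : Proper (eq ==> meq n ==> meq n) mscal.
Proof. intros c c' <- A A' EA i j Hi Hj; unfold mscal; rewrite EA; auto. Qed.
#[global] Instance mmul_proper n : Proper (meq n ==> meq n ==> meq n) (mmul n).
Proof.
  intros A A' EA B B' EB i j Hi Hj; unfold mmul.
  apply csum_ext; intros k Hk; rewrite EA, EB; auto.
Qed.
#[global] Instance mtrace_proper n : Proper (meq n ==> eq) (mtrace n).
Proof. intros A A' EA; unfold mtrace; apply csum_ext; intros k Hk; rewrite EA; auto. Qed.

Lemma mmul_assoc n A B D : mmul n (mmul n A B) D = mmul n A (mmul n B D).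
Proof.
  mat_ext; unfold mmul.
  rewrite (csum_ext n _ (fun k => csum n (fun l => Cmul (A i l) (Cmul (B l k) (D k j))))).
  - rewrite csum_swap; apply csum_ext; intros l _; rewrite <- csum_mul_l; reflexivity.
  - intros k _; rewrite <- csum_mul_r; apply csum_ext; intros; ring.
Qed.

Lemma mmul_maddl n A B D : mmul n (madd A B) D = madd (mmul n A D) (mmul n B D).
Proof. mat_ext; unfold mmul, madd; rewrite <- csum_add; apply csum_ext; intros; ring. Qed.
Lemma mmul_maddr n A B D : mmul n D (madd A B) = madd (mmul n D A) (mmul n D B).
Proof. mat_ext; unfold mmul, madd; rewrite <- csum_add; apply csum_ext; intros; ring. Qed.
Lemma mmul_mscall n c A B : mmul n (mscal c A) B = mscal c (mmul n A B).
Proof. mat_ext; unfold mmul, mscal; rewrite <- csum_mul_l; apply csum_ext; intros; ring. Qed.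
Lemma mmul_mscalr n c A B : mmul n A (mscal c B) = mscal c (mmul n A B).
Proof. mat_ext; unfold mmul, mscal; rewrite <- csum_mul_l; apply csum_ext; intros; ring. Qed.
Lemma mmul_mzerol n A : mmul n mzero A = mzero.
Proof.
  mat_ext; unfold mmul, mzero; transitivity (csum n (fun _ => C0)).
  - apply csum_ext; intros; ring.
  - apply csum_zero.
Qed.
Lemma madd_mzerol A : madd mzero A = A.
Proof. mat_ext; unfold madd, mzero; ring. Qed.

Lemma mmul_midl n A : meq n (mmul n mid A) A.
Proof. intros i j Hi _; exact (csum_delta n i (fun k => A k j) Hi). Qed.
Lemma mmul_midr n A : meq n (mmul n A mid) A.
Proof. intros i j _ Hj; exact (csum_delta_r n j (fun k => A i k) Hj). Qed.

Lemma msubE A B : msub A B = madd A (mscal (Copp C1) B).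
Proof. mat_ext; unfold msub, madd, mscal; ring. Qed.

Lemma adj_madd A B : adj (madd A B) = madd (adj A) (adj B).
Proof. mat_ext; apply Cconj_add. Qed.
Lemma adj_msub A B : adj (msub A B) = msub (adj A) (adj B).
Proof. mat_ext; apply Cconj_sub. Qed.
Lemma adj_mscal c A : adj (mscal c A) = mscal (Cconj c) (adj A).
Proof. mat_ext; apply Cconj_mul. Qed.
Lemma adj_mmul n A B : adj (mmul n A B) = mmul n (adj B) (adj A).
Proof.
  mat_ext; unfold adj, mmul; rewrite csum_conj.
  apply csum_ext; intros; rewrite Cconj_mul; ring.
Qed.
Lemma adj_involutive A : adj (adj A) = A.
Proof. mat_ext; apply Cconj_involutive. Qed.
Lemma adj_mid : adj mid = mid.
Proof.
  mat_ext; unfold adj, mid; rewrite Nat.eqb_sym.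
  destruct (Nat.eqb i j); apply C_ext; simpl; ring.
Qed.

Lemma mtrace_madd n A B : mtrace n (madd A B) = Cadd (mtrace n A) (mtrace n B).
Proof. apply csum_add. Qed.
Lemma mtrace_mscal n c A : mtrace n (mscal c A) = Cmul c (mtrace n A).
Proof. apply csum_mul_l. Qed.
Lemma mtrace_mmulC n A B : mtrace n (mmul n A B) = mtrace n (mmul n B A).
Proof.
  unfold mtrace, mmul; rewrite csum_swap.
  apply csum_ext; intros; apply csum_ext; intros; ring.
Qed.

(** * Hermitian structure *)

Lemma hermitian_HH n H U : hermitian n H -> hermitian n (HH n H U).
Proof.
  intros HH0; unfold hermitian, HH in *.
  rewrite !adj_mmul, adj_involutive, HH0, mmul_assoc; reflexivity.
Qed.

Lemma hermitian_reflection n P :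
  hermitian n P -> hermitian n (msub mid (mscal (RtoC 2) P)).
Proof.
  intros HP; unfold hermitian in *.
  rewrite adj_msub, adj_mscal, adj_mid, Cconj_RtoC, HP; reflexivity.
Qed.

Lemma hermitian_rho0 n psi : hermitian n (rho0 psi).
Proof.
  intros i j _ _; unfold adj, rho0, outer.
  rewrite Cconj_mul, Cconj_involutive; ring.
Qed.

Lemma skew_hermitian_acomm n S K :
  hermitian n S -> skew_hermitian n K -> skew_hermitian n (acomm n S K).
Proof.
  intros HS HK; unfold hermitian, skew_hermitian, acomm in *.
  rewrite adj_madd, !adj_mmul, HS, HK, mmul_mscall, mmul_mscalr, RtoC_m1.
  intros i j _ _; unfold madd, mscal; ring.
Qed.

Lemma skew_hermitian_madd_imag n c X A :
  Cconj c = Copp c -> hermitian n X -> skew_hermitian n A ->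
  skew_hermitian n (madd (mscal c X) A).
Proof.
  intros Hc HX HA; unfold hermitian, skew_hermitian in *.
  rewrite adj_madd, adj_mscal, Hc, HX, HA, RtoC_m1.
  intros i j _ _; unfold madd, mscal; ring.
Qed.

Lemma rho0_idem n psi : unit_vec n psi -> meq n (mmul n (rho0 psi) (rho0 psi)) (rho0 psi).
Proof.
  intros Hu i j _ _; unfold mmul, rho0, outer.
  rewrite (csum_ext n _ (fun k => Cmul (Cmul (psi i) (Cconj (psi j))) (Cmul (Cconj (psi k)) (psi k))))
    by (intros; ring).
  rewrite csum_mul_l; unfold unit_vec, vdot in Hu; rewrite Hu; ring.
Qed.

(* Both sides equal [-2 P K P]. *)
Lemma acomm_reflection_commute n P K :
  meq n (mmul n P P) P ->
  meq n (mmul n (acomm n (msub mid (mscal (RtoC 2) P)) K) P)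
        (mmul n P (acomm n (msub mid (mscal (RtoC 2) P)) K)).
Proof.
  intros HP.
  assert (HP' : forall A, meq n (mmul n P (mmul n P A)) (mmul n P A))
    by (intros A; rewrite <- mmul_assoc, HP; reflexivity).
  unfold acomm; rewrite msubE.
  rewrite ?mmul_maddl, ?mmul_maddr, ?mmul_mscall, ?mmul_mscalr, ?mmul_maddl, ?mmul_maddr,
    ?mmul_mscall, ?mmul_mscalr, ?mmul_assoc, ?mmul_midl, ?mmul_midr, ?HP, ?HP',
    ?mmul_midl, ?mmul_midr.
  intros i j _ _; unfold madd, mscal; rewrite RtoC_2; ring.
Qed.

(** * Derivatives of curves *)

Lemma cderiv_ext f a b t : cderiv f a t -> a = b -> cderiv f b t.
Proof. intros D <-; exact D. Qed.

Lemma cderiv_const c t : cderiv (fun _ => c) C0 t.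
Proof. split; apply derivable_pt_lim_const. Qed.

Lemma cderiv_add f g a b t : cderiv f a t -> cderiv g b t ->
  cderiv (fun s => Cadd (f s) (g s)) (Cadd a b) t.
Proof. intros [Df1 Df2] [Dg1 Dg2]; split; apply derivable_pt_lim_plus; assumption. Qed.

Lemma cderiv_mul f g a b t : cderiv f a t -> cderiv g b t ->
  cderiv (fun s => Cmul (f s) (g s)) (Cadd (Cmul a (g t)) (Cmul (f t) b)) t.
Proof.
  intros [Df1 Df2] [Dg1 Dg2]; split; simpl.
  - replace (Re a * Re (g t) - Im a * Im (g t) + (Re (f t) * Re b - Im (f t) * Im b))
      with (Re a * Re (g t) + Re (f t) * Re b - (Im a * Im (g t) + Im (f t) * Im b)) by ring.
    apply derivable_pt_lim_minus; apply derivable_pt_lim_mult; assumption.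
  - replace (Re a * Im (g t) + Im a * Re (g t) + (Re (f t) * Im b + Im (f t) * Re b))
      with (Re a * Im (g t) + Re (f t) * Im b + (Im a * Re (g t) + Im (f t) * Re b)) by ring.
    apply derivable_pt_lim_plus; apply derivable_pt_lim_mult; assumption.
Qed.

Lemma cderiv_conj f a t : cderiv f a t -> cderiv (fun s => Cconj (f s)) (Cconj a) t.
Proof. intros [D1 D2]; split; [exact D1 | exact (derivable_pt_lim_opp _ _ _ D2)]. Qed.

Lemma cderiv_csum n (F : R -> nat -> C) G t :
  (forall k, (k < n)%nat -> cderiv (fun s => F s k) (G k) t) ->
  cderiv (fun s => csum n (F s)) (csum n G) t.
Proof.
  induction n as [|n IH]; intros D; simpl; [apply cderiv_const|].
  apply cderiv_add; [apply IH; auto with arith | apply D; auto with arith].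
Qed.

#[global] Instance mderiv_proper n A t : Proper (meq n ==> iff) (fun D => mderiv n A D t).
Proof.
  intros D D' E; split; intros DA i j Hi Hj; [rewrite <- E | rewrite E]; auto.
Qed.

Lemma mderiv_const n M t : mderiv n (fun _ => M) mzero t.
Proof. intros i j _ _; apply cderiv_const. Qed.

Lemma mderiv_adj n A A' t : mderiv n A A' t -> mderiv n (fun s => adj (A s)) (adj A') t.
Proof. intros DA i j Hi Hj; apply (cderiv_conj (fun s => A s j i)); auto. Qed.

Lemma mderiv_mmul n A B A' B' t : mderiv n A A' t -> mderiv n B B' t ->
  mderiv n (fun s => mmul n (A s) (B s)) (madd (mmul n A' (B t)) (mmul n (A t) B')) t.
Proof.
  intros DA DB i j Hi Hj; unfold mmul, madd; rewrite <- csum_add.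
  apply (cderiv_csum n (fun s k => Cmul (A s i k) (B s k j))).
  intros k Hk; apply cderiv_mul; [apply DA | apply DB]; auto.
Qed.

Lemma vderiv_mvmul n A A' v t :
  mderiv n A A' t -> vderiv n (fun s => mvmul n (A s) v) (mvmul n A' v) t.
Proof.
  intros DA i Hi; unfold mvmul.
  apply (cderiv_csum n (fun s k => Cmul (A s i k) (v k))); intros k Hk.
  eapply cderiv_ext; [apply (cderiv_mul (fun s => A s i k) (fun _ => v k)) | ].
  - apply DA; auto.
  - apply cderiv_const.
  - ring.
Qed.

Lemma mderiv_heisenberg n M U xi t :
  skew_hermitian n xi -> mderiv n U (mmul n (U t) xi) t ->
  mderiv n (fun s => mmul n (adj (U s)) (mmul n M (U s)))
    (comm n (mmul n (adj (U t)) (mmul n M (U t))) xi) t.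
Proof.
  intros Hxi DU.
  assert (D := mderiv_mmul n _ _ _ _ t (mderiv_adj n _ _ t DU)
                 (mderiv_mmul n _ _ _ _ t (mderiv_const n M t) DU)).
  cbv beta in D; revert D; apply mderiv_proper.
  unfold skew_hermitian in Hxi.
  unfold comm; rewrite mmul_mzerol, madd_mzerol, adj_mmul, Hxi, !mmul_assoc, mmul_mscall, RtoC_m1.
  intros i j _ _; unfold msub, madd, mscal; ring.
Qed.

(** * Matrices acting on vectors *)

Lemma mvmul_mmul n A B v : mvmul n (mmul n A B) v = mvmul n A (mvmul n B v).
Proof.
  apply functional_extensionality; intro i; unfold mvmul, mmul.
  rewrite (csum_ext n _ (fun k => csum n (fun l => Cmul (A i l) (Cmul (B l k) (v k))))).
  - rewrite csum_swap; apply csum_ext; intros l _; rewrite <- csum_mul_l; reflexivity.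
  - intros k _; rewrite <- csum_mul_r; apply csum_ext; intros; ring.
Qed.

Lemma mvmul_madd n A B v i : mvmul n (madd A B) v i = Cadd (mvmul n A v i) (mvmul n B v i).
Proof. unfold mvmul, madd; rewrite <- csum_add; apply csum_ext; intros; ring. Qed.

Lemma mvmul_mscal n c A v i : mvmul n (mscal c A) v i = Cmul c (mvmul n A v i).
Proof. unfold mvmul, mscal; rewrite <- csum_mul_l; apply csum_ext; intros; ring. Qed.

Lemma mvmul_lincomb n A a b v w i :
  mvmul n A (fun k => Cadd (Cmul a (v k)) (Cmul b (w k))) i
  = Cadd (Cmul a (mvmul n A v i)) (Cmul b (mvmul n A w i)).
Proof. unfold mvmul; rewrite <- !csum_mul_l, <- csum_add; apply csum_ext; intros; ring. Qed.

Lemma mvmul_vext n A v w i : veq n v w -> mvmul n A v i = mvmul n A w i.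
Proof. intros E; unfold mvmul; apply csum_ext; intros k Hk; rewrite E; auto. Qed.

Lemma mvmul_meq n A B v i : meq n A B -> (i < n)%nat -> mvmul n A v i = mvmul n B v i.
Proof. intros E Hi; unfold mvmul; apply csum_ext; intros k Hk; rewrite E; auto. Qed.

Lemma mvmul_mid n v i : (i < n)%nat -> mvmul n mid v i = v i.
Proof. apply csum_delta. Qed.

Lemma mvmul_HH n H U v i : unitary n U -> (i < n)%nat ->
  mvmul n U (mvmul n (HH n H U) v) i = mvmul n H (mvmul n U v) i.
Proof.
  intros [_ HUU] Hi; unfold HH; rewrite !mvmul_mmul, <- (mvmul_mmul n U (adj U)).
  rewrite (mvmul_meq n _ mid) by assumption; apply mvmul_mid, Hi.
Qed.

Lemma mvmul_refl0 n psi w k : (k < n)%nat ->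
  mvmul n (refl0 psi) w k = Csub (w k) (Cmul (RtoC 2) (Cmul (psi k) (vdot n psi w))).
Proof.
  intros Hk; unfold mvmul, refl0, msub, mscal, rho0, outer, vdot.
  rewrite (csum_ext n _ (fun l => Cadd (Cmul (mid k l) (w l))
             (Cmul (Copp (Cmul (RtoC 2) (psi k))) (Cmul (Cconj (psi l)) (w l)))))
    by (intros; ring).
  rewrite csum_add, csum_mul_l, csum_delta by exact Hk; ring.
Qed.

(* [refl0 psi] fixes the orthogonal complement of [psi] and sends [psi] to [-psi]. *)
Lemma mvmul_acomm_refl0 n psi K k : unit_vec n psi -> (k < n)%nat ->
  mvmul n (acomm n (refl0 psi) K) psi k
  = Cmul (Cmul (RtoC (-2)) (vdot n psi (mvmul n K psi))) (psi k).
Proof.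
  intros Hu Hk; unfold acomm; rewrite mvmul_madd, !mvmul_mmul.
  rewrite (mvmul_vext n K _ (fun l => Cadd (Cmul (Copp C1) (psi l)) (Cmul C0 (psi l)))).
  - rewrite mvmul_lincomb, mvmul_refl0 by exact Hk; rewrite RtoC_2, RtoC_m2; ring.
  - intros l Hl; rewrite mvmul_refl0 by exact Hl; unfold unit_vec in Hu; rewrite Hu, RtoC_2; ring.
Qed.

Lemma vdot_mvmul n u A v :
  vdot n u (mvmul n A v) = csum n (fun k => csum n (fun l => Cmul (Cconj (u k)) (Cmul (A k l) (v l)))).
Proof. apply csum_ext; intros; unfold mvmul; rewrite csum_mul_l; reflexivity. Qed.

Lemma Re_vdot_skew n psi K : skew_hermitian n K -> Re (vdot n psi (mvmul n K psi)) = 0.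
Proof.
  intros HK; apply Cconj_opp_Re_0; rewrite !vdot_mvmul, csum_conj.
  transitivity (csum n (fun l => csum n (fun k =>
                  Cmul (Copp C1) (Cmul (Cconj (psi l)) (Cmul (K l k) (psi k)))))).
  - rewrite csum_swap; apply csum_ext; intros k Hk; rewrite csum_conj.
    apply csum_ext; intros l Hl.
    assert (E := HK l k Hl Hk); unfold adj, mscal in E.
    rewrite !Cconj_mul, Cconj_involutive, E, RtoC_m1; ring.
  - rewrite <- (Cmul_m1 (csum _ _)), <- csum_mul_l.
    apply csum_ext; intros; rewrite <- csum_mul_l; reflexivity.
Qed.

Lemma comm_mscall n c A B : comm n (mscal c A) B = mscal c (comm n A B).
Proof.
  unfold comm; rewrite mmul_mscall, mmul_mscalr; mat_ext; unfold msub, mscal; ring.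
Qed.

Lemma comm_madd_mscal_self n c X B : comm n X (madd (mscal c X) B) = comm n X B.
Proof.
  unfold comm; rewrite mmul_maddl, mmul_maddr, mmul_mscall, mmul_mscalr.
  mat_ext; unfold msub, madd, mscal; ring.
Qed.

Lemma mtrace_mmul_comm n P X B :
  meq n (mmul n B P) (mmul n P B) -> mtrace n (mmul n P (comm n X B)) = C0.
Proof.
  intros HBP; unfold comm; rewrite msubE, mmul_maddr, mmul_mscalr, mtrace_madd, mtrace_mscal.
  rewrite <- !mmul_assoc, (mtrace_mmulC n (mmul n P X)), <- mmul_assoc, HBP; ring.
Qed.

(** * The flow [U' = U xiH] *)

Section Flow.

Variables (n : nat) (H : Mat) (hbar : R) (psi0 : Vec) (K U : Mat).
Hypotheses (H_herm : hermitian n H) (hbar_neq0 : hbar <> 0)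
  (psi0_unit : unit_vec n psi0) (K_skew : skew_hermitian n K).

Lemma ihbar_mul_xi_coef :
  Cmul (Cmul Ci (RtoC hbar)) (Cmul (Copp Ci) (RtoC (/ hbar))) = C1.
Proof. apply C_ext; simpl; field; exact hbar_neq0. Qed.

Lemma skew_hermitian_xiH : skew_hermitian n (xiH n hbar H psi0 K U).
Proof.
  apply skew_hermitian_madd_imag.
  - apply C_ext; simpl; ring.
  - apply hermitian_HH, H_herm.
  - apply skew_hermitian_acomm; [apply hermitian_reflection, hermitian_rho0 | exact K_skew].
Qed.

Lemma ihbar_xiH_sub_HH :
  msub (mscal (Cmul Ci (RtoC hbar)) (xiH n hbar H psi0 K U)) (HH n H U)
  = mscal (Cmul Ci (RtoC hbar)) (acomm n (refl0 psi0) K).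
Proof.
  mat_ext; unfold xiH, msub, madd, mscal.
  rewrite <- (Cmul_1_l (HH n H U i j)) at 2; rewrite <- ihbar_mul_xi_coef; ring.
Qed.

Lemma acomm_refl0_commute :
  meq n (mmul n (acomm n (refl0 psi0) K) (rho0 psi0))
        (mmul n (rho0 psi0) (acomm n (refl0 psi0) K)).
Proof. apply acomm_reflection_commute, rho0_idem, psi0_unit. Qed.

Lemma Im_alpha : Im (alpha n hbar psi0 K) = 0.
Proof.
  unfold alpha; assert (E := Re_vdot_skew n psi0 K K_skew); revert E.
  destruct (vdot n psi0 (mvmul n K psi0)) as [x y]; simpl; intros ->; ring.
Qed.

Lemma schroedinger_xiH i : unitary n U -> (i < n)%nat ->
  Cmul (Cmul Ci (RtoC hbar)) (mvmul n (mmul n U (xiH n hbar H psi0 K U)) psi0 i)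
  = Cadd (mvmul n H (mvmul n U psi0) i) (Cmul (alpha n hbar psi0 K) (mvmul n U psi0 i)).
Proof.
  intros HU Hi; rewrite mvmul_mmul.
  rewrite (mvmul_vext n U _ (fun l =>
             Cadd (Cmul (Cmul (Copp Ci) (RtoC (/ hbar))) (mvmul n (HH n H U) psi0 l))
                  (Cmul (Cmul (RtoC (-2)) (vdot n psi0 (mvmul n K psi0))) (psi0 l)))).
  - rewrite mvmul_lincomb, mvmul_HH by assumption; unfold alpha.
    rewrite <- (Cmul_1_l (mvmul n H _ i)) at 2; rewrite <- ihbar_mul_xi_coef; ring.
  - intros l Hl; unfold xiH.
    rewrite mvmul_madd, mvmul_mscal, mvmul_acomm_refl0 by assumption; reflexivity.
Qed.

End Flow.

Theorem mainTheorem7 (n : nat) (H : Mat) (hbar : R) (psi0 : Vec)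
  (kappa : R -> Mat) (U : R -> Mat) :
  hermitian n H ->
  0 < hbar ->
  unit_vec n psi0 ->
  smooth_curve n kappa ->
  (forall t, skew_hermitian n (kappa t)) ->
  (forall t, unitary n (U t)) ->
  (forall t, mderiv n U (mmul n (U t) (xiH n hbar H psi0 (kappa t) (U t))) t) ->
  (* (i) *)
  (forall t, meq n
     (comm n (msub (mscal (Cmul Ci (RtoC hbar)) (xiH n hbar H psi0 (kappa t) (U t)))
                   (HH n H (U t)))
             (rho0 psi0))
     mzero)
  /\
  (* (ii) *)
  (forall t,
     mderiv n (fun s => HH n H (U s))
       (comm n (HH n H (U t)) (acomm n (refl0 psi0) (kappa t))) t
     /\ mtrace n (mmul n (rho0 psi0)
                   (comm n (HH n H (U t)) (acomm n (refl0 psi0) (kappa t)))) = C0)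
  /\
  (* (iii) *)
  (exists psidot : R -> Vec,
     forall t,
       vderiv n (fun s => mvmul n (U s) psi0) (psidot t) t
       /\ veq n (fun i => Cmul (Cmul Ci (RtoC hbar)) (psidot t i))
                (fun i => Cadd (mvmul n H (mvmul n (U t) psi0) i)
                               (Cmul (alpha n hbar psi0 (kappa t)) (mvmul n (U t) psi0 i)))
       /\ Im (alpha n hbar psi0 (kappa t)) = 0).
Proof.
  intros H_herm hbar_pos psi0_unit _ kappa_skew U_unitary DU.
  assert (hbar_neq0 : hbar <> 0) by lra.
  split; [|split].
  - intros t; rewrite ihbar_xiH_sub_HH by assumption; rewrite comm_mscall.
    unfold comm; rewrite acomm_refl0_commute by assumption.
    intros i j _ _; unfold mscal, msub, mzero; ring.
  - intros t; split.
    + rewrite <- comm_madd_mscal_self with (c := Cmul (Copp Ci) (RtoC (/ hbar))).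
      apply mderiv_heisenberg; [apply skew_hermitian_xiH; auto | apply DU].
    + apply mtrace_mmul_comm, acomm_refl0_commute, psi0_unit.
  - exists (fun t => mvmul n (mmul n (U t) (xiH n hbar H psi0 (kappa t) (U t))) psi0).
    intros t; split; [|split].
    + apply vderiv_mvmul, DU.
    + intros i Hi; apply schroedinger_xiH; auto.
    + apply Im_alpha, kappa_skew.
Qed.
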